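(* Let $\check p>0$, $\check\alpha>0$, $\gamma\ge0$. For all $x>0$ and $T>0$, \[ \tilde v(x,T)\le\bar v(x,T)\le\tilde v(x,T)+\mathbb E^x\big[\mathbf 1_{\{\theta\ge T\}}\big(e^{-rT}\gamma+e^{-r\theta}\check\alpha\big)\big]. \]
   Context: Let $X$ be a spectrally negative Lévy process (no positive jumps, not the negative of a subordinator, Lévy measure without atoms), $\mathbb P^x$ the law with $X_0=x$, $\mathbb E^x$ its expectation, $\mathbb F$ the filtration generated by $X$; $r>0$ fixed with $\log\mathbb E^0[e^{X_1}]=r$. Let $\theta:=\inf\{t\ge0:X_t\le0\}$ ($\inf\emptyset=\infty$, $e^{-r\infty}=0$). $\mathcal S$ is the set of $\mathbb F$-stopping times $\tau\le\theta$ a.s., and for $T>0$, $\mathcal S_T$ the set of $\mathbb F$-stopping times $\tau\le\theta\wedge T$ a.s. Define $v(x):=\sup_{\tau\in\mathcal S}\mathbb E^x\big[\mathbf 1_{\{\tau<\infty\}}\big(\int_\tau^\theta e^{-rt}\check p\,dt-e^{-r\tau}\gamma\mathbf 1_{\{\tau<\theta\}}-e^{-r\theta}\check\alpha\mathbf 1_{\{\tau<\theta\}}\big)\big]$, $\bar v(x,T):=\sup_{\tau\in\mathcal S_T}\mathbb E^x\big[\int_\tau^{\theta\wedge T}e^{-rt}\check p\,dt-e^{-r\tau}\gamma\mathbf 1_{\{\tau<\theta\wedge T\}}-e^{-r\theta}\check\alpha\mathbf 1_{\{\tau<\theta<T\}}\big]$, and $\tilde v(x,T):=v(x)-\mathbb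 E^x\big[\mathbf 1_{\{\theta\ge T\}}\int_T^\theta e^{-rt}\check p\,dt\big]$. *)

From HB Require Import structures.
From mathcomp Require Import all_boot all_order all_algebra.
From mathcomp Require Import all_classical all_reals all_analysis.
Set Implicit Arguments. Unset Strict Implicit. Unset Printing Implicit Defensive.
Import Order.TTheory GRing.Theory Num.Theory.
Import numFieldNormedType.Exports.
Local Open Scope classical_set_scope.
Local Open Scope ring_scope.

Section defs.
Context {R : realType} {d : measure_display} {Omega : measurableType d}.

Definition mutually_independent (P : probability Omega R) (n : nat)
    (Y : 'I_n -> Omega -> R) : Prop :=
  forall B : 'I_n -> set R, (forall i, measurable (B i)) ->
    P (\bigcap_(i in [set: 'I_n]) (Y i @^-1` B i)) =
    (\prod_(i < n) P (Y i @^-1` B i))%E.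

Definition left_lim (X : R -> Omega -> R) (w : Omega) (t : R) : R :=
  lim ((X^~ w) @ t^'-).

Definition jump (X : R -> Omega -> R) (w : Omega) (t : R) : R :=
  X t w - left_lim X w t.

Definition is_levy (P : probability Omega R) (X : R -> Omega -> R) : Prop :=
  [/\ (forall t, measurable_fun setT (X t)),
      {ae P, forall w, X 0 w = 0},
      (forall w t, 0 <= t -> (X^~ w) x @[x --> t^'+] --> X t w) /\
        (forall w t, 0 < t -> cvg ((X^~ w) @ t^'-)),
      (forall (n : nat) (t : nat -> R), 0 <= t 0%N -> (forall k, t k < t k.+1) ->
         mutually_independent P (fun i : 'I_n => fun w => X (t i.+1) w - X (t i) w))
    & (forall s t (B : set R), 0 <= s -> 0 <= t -> measurable B ->
         P [set w | B (X (t + s) w - X t w)] = P [set w | B (X s w)])].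

Definition levy_measure (P : probability Omega R) (X : R -> Omega -> R)
    (A : set R) : \bar R :=
  (\int[P]_w (\esum_(t in [set t : R | (0 < t <= 1)%R /\ A (jump X w t)]) 1))%E.

(** Spectrally negative Levy process: no positive jumps, not the negative of
    a subordinator, Levy measure without atoms. *)
Definition is_spectrally_negative_levy (P : probability Omega R)
    (X : R -> Omega -> R) : Prop :=
  [/\ is_levy P X,
      {ae P, forall w, forall t, 0 < t -> jump X w t <= 0},
      ~ {ae P, forall w, forall s t, 0 <= s -> s <= t -> X t w <= X s w}
    & (forall a : R, a != 0 -> levy_measure P X [set a] = 0%E)].

(** The process under P^x: x + X. *)
Definition start_at (x : R) (X : R -> Omega -> R) : R -> Omega -> R :=
  fun t w => x + X t w.

Definition natural_filtration (Y : R -> Omega -> R) (t : R) : set (set Omega) :=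
  <<s [set A | exists s, [/\ 0 <= s, s <= t &
                 exists B : set R, measurable B /\ A = Y s @^-1` B]] >>.

Definition stopping_time (Y : R -> Omega -> R) (tau : Omega -> \bar R) : Prop :=
  (forall w, (0 <= tau w)%E) /\
  (forall t, 0 <= t -> natural_filtration Y t [set w | (tau w <= t%:E)%E]).

(** theta := inf {t >= 0 : Y_t <= 0}, inf of the empty set = +oo. *)
Definition theta (Y : R -> Omega -> R) (w : Omega) : \bar R :=
  ereal_inf [set t%:E | t in [set t : R | 0 <= t /\ Y t w <= 0]].

(** e^{-r t} with the convention e^{-r oo} = 0. *)
Definition edisc (r : R) (t : \bar R) : R :=
  match t with EFin s => expR (- r * s) | _ => 0 end.

Definition dint (r p : R) (a b : \bar R) : \bar R :=
  (\int[lebesgue_measure]_(t in [set t : R | (a <= t%:E)%E /\ (t%:E < b)%E])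
     (p * expR (- r * t))%:E)%E.

Local Open Scope ereal_scope.

Definition payoff (r p g al : R) (Y : R -> Omega -> R) (tau : Omega -> \bar R)
    (w : Omega) : \bar R :=
  if tau w < +oo then
    dint r p (tau w) (theta Y w)
    - (if tau w < theta Y w then (g * edisc r (tau w))%:E else 0)
    - (if tau w < theta Y w then (al * edisc r (theta Y w))%:E else 0)
  else 0.

Definition payoff_bar (r p g al Tm : R) (Y : R -> Omega -> R)
    (tau : Omega -> \bar R) (w : Omega) : \bar R :=
  dint r p (tau w) (mine (theta Y w) Tm%:E)
  - (if tau w < mine (theta Y w) Tm%:E then (g * edisc r (tau w))%:E else 0)
  - (if (tau w < theta Y w) && (theta Y w < Tm%:E)
     then (al * edisc r (theta Y w))%:E else 0).

Definition v (P : probability Omega R) (X : R -> Omega -> R) (r p g al x : R)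
    : \bar R :=
  ereal_sup [set \int[P]_w payoff r p g al (start_at x X) tau w | tau in
    [set tau | stopping_time (start_at x X) tau /\
               {ae P, forall w, tau w <= theta (start_at x X) w}]].

Definition vbar (P : probability Omega R) (X : R -> Omega -> R)
    (r p g al x Tm : R) : \bar R :=
  ereal_sup [set \int[P]_w payoff_bar r p g al Tm (start_at x X) tau w | tau in
    [set tau | stopping_time (start_at x X) tau /\
               {ae P, forall w, tau w <= mine (theta (start_at x X) w) Tm%:E}]].

Definition vtilde (P : probability Omega R) (X : R -> Omega -> R)
    (r p g al x Tm : R) : \bar R :=
  v P X r p g al x
  - \int[P]_w (if Tm%:E <= theta (start_at x X) w
               then dint r p Tm%:E (theta (start_at x X) w) else 0).

End defs.

From HB Require Import structures.
From mathcomp Require Import all_boot all_order all_algebra.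
From mathcomp Require Import all_classical all_reals all_analysis.
From mathcomp Require Import measurable_realfun lra.
Set Implicit Arguments. Unset Strict Implicit. Unset Printing Implicit Defensive.
Import Order.TTheory GRing.Theory Num.Theory.
Import numFieldNormedType.Exports.
Local Open Scope classical_set_scope.
Local Open Scope ring_scope.

(* Both bounds hold pathwise.  The discounted integral over [a, b) equals
   (p/r)(e^{-ra} - e^{-rb}), so every payoff is a bounded function of (tau, theta).
   Replacing tau <= theta by min(tau, T) forfeits at most the reward earned after T
   on {theta >= T}: this is the lower bound.  Conversely a time tau <= min(theta, T)
   is admissible for v, and its truncated payoff is at most its untruncated one minus
   that tail reward plus gamma e^{-rT} + alpha e^{-r theta} on {theta >= T}: this is
   the upper bound.  The integrals require theta to be measurable: off a null set,
   right continuity and the absence of upward jumps make {theta <= t} the event that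
   for every n the path is below 1/(n+1) at t or at some rational time of [0, t],
   and completeness of P absorbs the null set. *)

Section discounted_integral.
Context {R : realType}.
Notation mu := (@lebesgue_measure R).
Local Open Scope ereal_scope.

Lemma integral_exponential_pdf_itv (r a : R) : (0 < r)%R -> (0 <= a)%R ->
  \int[mu]_(x in `[a, +oo[) (exponential_pdf r x)%:E = (expR (- r * a))%:E.
Proof.
move=> r0 a0.
have cexpN : continuous (fun z : R^o => expR (- r * z)).
  move=> z; apply: continuous_comp; last exact: continuous_expR.
  by apply: continuousM => //; apply: (@continuousN _ R^o); exact: cst_continuous.
rewrite (@ge0_continuous_FTC2y _ _ (fun x => - (expR (- r * x)))%R _ 0)//.
- by rewrite EFinN oppeK add0e.
- by move=> x _; apply: exponential_pdf_ge0; exact: ltW.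
- apply: (@continuous_subspaceW R^o _ _ [set` `[0, +oo[%R]).
    by apply: subset_itvr; rewrite bnd_simp.
  exact: within_continuous_exponential_pdf.
- rewrite -oppr0; apply: cvgN.
  rewrite (_ : (fun x => expR (- r * x)) = (fun z => expR (- z)) \o *%R r);
    last by apply: eq_fun => x; rewrite mulNr.
  apply: (@cvg_comp _ _ _ _ _ _ (pinfty_nbhs R)); last exact: cvgr_expR.
  exact: gt0_cvgMry.
- by apply: cvgN; apply/cvg_at_right_filter; exact: cexpN.
- move=> x; rewrite in_itv/= andbT => ax.
  by apply: derive1_exponential_pdf; rewrite in_itv/= andbT (le_lt_trans a0).
Qed.

Lemma integral_expR_itv (r p a : R) : (0 < r)%R -> (0 <= p)%R -> (0 <= a)%R ->
  \int[mu]_(x in `[a, +oo[) (p * expR (- r * x))%:E = (p / r * expR (- r * a))%:E.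
Proof.
move=> r0 p0 a0.
transitivity (\int[mu]_(x in `[a, +oo[) ((p / r)%:E * (exponential_pdf r x)%:E)).
  apply: eq_integral => x; rewrite inE/= in_itv/= andbT => ax.
  by rewrite exponential_pdfE ?(le_trans a0)// -EFinM mulrA divfK// gt_eqF.
rewrite ge0_integralZl//; last 3 first.
- apply/measurable_realfun.measurable_EFinP; apply: measurable_funTS.
  by apply: measurable_exponential_pdf; exact: ltW.
- by move=> x _; rewrite lee_fin exponential_pdf_ge0// ltW.
- by rewrite lee_fin divr_ge0// ltW.
by rewrite integral_exponential_pdf_itv// -EFinM.
Qed.

Definition dintR (c r : R) (a b : \bar R) : R :=
  if a < b then (c * (edisc r a - edisc r b))%R else 0%R.

Lemma dintE (r p : R) (a b : \bar R) : (0 < r)%R -> (0 <= p)%R -> 0 <= a ->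
  dint r p a b = (dintR (p / r) r a b)%:E.
Proof.
move=> r0 p0; rewrite /dint /dintR.
have empty (A : set R) : A = set0 -> \int[mu]_(t in A) (p * expR (- r * t))%:E = 0.
  by move=> ->; rewrite integral_set0.
case: a => [s| |] //= s0; last first.
  rewrite ltNge leey /= empty //.
  by apply/seteqP; split => t //= []; rewrite leNgt ltey.
rewrite lee_fin in s0.
case: b => [u| |]; last first.
- rewrite ltNge leNye /= empty //.
  by apply/seteqP; split => t //= [].
- rewrite ltey /= subr0 -integral_expR_itv//; congr (integral _ _ _).
  by apply/seteqP; split => t /=; rewrite in_itv/= andbT lee_fin ?ltry//; case.
rewrite lte_fin; have [su|us] := ltP s u; last first.
  rewrite empty//; apply/seteqP; split => t //= []; rewrite !lee_fin lte_fin.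
  by move=> st tu; move: (le_lt_trans st tu); rewrite ltNge us.
have := integral_expR_itv r0 p0 s0.
rewrite (_ : `[s, +oo[%classic = `[s, u[ `|` `[u, +oo[); last first.
  by rewrite -itv_bndbnd_setU// bnd_simp ltW.
rewrite ge0_integral_setU //=; last 3 first.
- apply/measurable_realfun.measurable_EFinP/measurable_funTS.
  by apply: measurableT_comp => //; apply: measurableT_comp => //; exact: mulrl_measurable.
- by move=> t _; rewrite lee_fin mulr_ge0// expR_ge0.
- apply/disj_setPS => t [/=]; rewrite !in_itv/= => /andP[_ tu] /andP[ut _].
  by move: (lt_le_trans tu ut); rewrite ltxx.
rewrite integral_expR_itv ?(le_trans s0 (ltW su))// => int_split.
rewrite mulrBr EFinB -int_split addeK//; congr (integral _ _ _).
by apply/seteqP; split => t /=; rewrite in_itv/= !lee_fin !lte_fin => /andP.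
Qed.

End discounted_integral.

Section closed_forms.
Context {R : realType}.
Local Open Scope ereal_scope.

Lemma edisc_ge0 (r : R) (a : \bar R) : (0 <= edisc r a)%R.
Proof. by case: a => //= s; exact: expR_ge0. Qed.

Lemma edisc_le1 (r : R) (a : \bar R) : (0 <= r)%R -> 0 <= a -> (edisc r a <= 1)%R.
Proof.
move=> r0; case: a => [s| |] //= s0.
by rewrite expR_le1 mulNr oppr_le0 mulr_ge0// -lee_fin.
Qed.

Lemma edisc_nonincreasing (r : R) (a b : \bar R) : (0 <= r)%R -> 0 <= a -> a <= b ->
  (edisc r b <= edisc r a)%R.
Proof.
move=> r0; case: a => [s| |] //=; case: b => [u| |] //= s0; rewrite ?lee_fin => su;
  try exact: expR_ge0.
by rewrite ler_expR !mulNr lerN2 ler_wpM2l.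
Qed.

Lemma measurable_edisc (r : R) : measurable_fun setT (edisc r).
Proof.
rewrite (_ : edisc r = fun t => if t \is a fin_num then expR (- r * fine t) else 0%R);
  last by apply/funext => -[].
apply: measurable_fun_ifT => //.
- apply: (measurable_fun_bool true); rewrite setTI.
  rewrite (_ : _ @^-1` _ = setT `&` [set x | id x \is a fin_num]).
    exact: emeasurable_fin_num.
  by apply/seteqP; split => x /=; [move=> ->|case=> _ ->].
- apply: measurableT_comp; first exact: measurable_expR.
  by apply: measurableT_comp => //; exact: mulrl_measurable.
Qed.

Lemma mulr_edisc_itv (k r : R) (a : \bar R) : (0 <= k)%R -> (0 <= r)%R -> 0 <= a ->
  (0 <= k * edisc r a <= k)%R.
Proof. by move=> k0 r0 a0; rewrite mulr_ge0 ?edisc_ge0// ler_piMr ?edisc_le1. Qed.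

Lemma subr_ge0_edisc (r : R) (a b : \bar R) : (0 <= r)%R -> 0 <= a -> a <= b ->
  (0 <= edisc r a - edisc r b)%R.
Proof. by move=> r0 a0 ab; rewrite subr_ge0 edisc_nonincreasing. Qed.

Definition payoffR (c g al r : R) (a h : \bar R) : R :=
  (dintR c r a h - (if (a < h)%E then g * edisc r a + al * edisc r h else 0))%R.

Definition payoff_barR (c g al r Tm : R) (a h : \bar R) : R :=
  (dintR c r a (mine h Tm%:E) - (if (a < mine h Tm%:E)%E then g * edisc r a else 0)
   - (if (a < h)%E && (h < Tm%:E)%E then al * edisc r h else 0))%R.

Definition tail_costR (g al r Tm : R) (h : \bar R) : R :=
  if Tm%:E <= h then (g * expR (- r * Tm) + al * edisc r h)%R else 0%R.

Section pointwise.
Variables (c g al r Tm : R).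
Hypotheses (c0 : (0 <= c)%R) (g0 : (0 <= g)%R) (al0 : (0 <= al)%R) (r0 : (0 <= r)%R)
  (Tm0 : (0 < Tm)%R).

Let Tm0e : 0 <= Tm%:E. Proof. by rewrite lee_fin ltW. Qed.

Lemma payoffR_sub_le_payoff_barR_min (a h : \bar R) : 0 <= a -> a <= h ->
  (payoffR c g al r a h - dintR c r Tm%:E h <= payoff_barR c g al r Tm (mine a Tm%:E) h)%R.
Proof.
move=> a0 ah; have eA := edisc_ge0 r a; have eH := edisc_ge0 r h.
have alH := mulr_ge0 al0 eH; have gA := mulr_ge0 g0 eA.
rewrite /payoffR /payoff_barR /dintR.
have [hT|Th|hT] := ltgtP h Tm%:E; last subst h.
- by rewrite (min_l (ltW (le_lt_trans ah hT))) andbT; case: ifP => _; lra.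
- have cTH := mulr_ge0 c0 (subr_ge0_edisc r0 Tm0e (ltW Th)).
  rewrite andbF subr0; have [aT|Ta] := ltP a Tm%:E.
    by rewrite aT (lt_trans aT Th); lra.
  have cAT := mulr_ge0 c0 (subr_ge0_edisc r0 Tm0e Ta).
  by rewrite ltxx; case: ifP => _; lra.
- have [aT|Ta] := ltP a Tm%:E; first by rewrite aT andbF; lra.
  by rewrite ltxx andbF; lra.
Qed.

Lemma payoff_barR_le (a h : \bar R) : 0 <= a -> a <= h -> a <= Tm%:E ->
  (payoff_barR c g al r Tm a h
   <= payoffR c g al r a h - dintR c r Tm%:E h + tail_costR g al r Tm h)%R.
Proof.
move=> a0 ah aT; have eT := edisc_ge0 r Tm%:E.
have alT := mulr_ge0 al0 eT; have gT := mulr_ge0 g0 eT.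
rewrite /payoffR /payoff_barR /dintR /tail_costR -[expR _]/(edisc r Tm%:E).
have [hT|Th|->] := ltgtP h Tm%:E.
- by rewrite andbT; case: ifP => _; lra.
- rewrite andbF subr0; have [aT'|Ta] := ltP a Tm%:E.
    by rewrite (lt_trans aT' Th); lra.
  have -> : a = Tm%:E by apply/eqP; rewrite eq_le aT Ta.
  by rewrite Th; lra.
- by rewrite andbF; case: ifP => _; lra.
Qed.

End pointwise.
End closed_forms.

Section closed_forms_measurable.
Context {R : realType} {d : measure_display} {Omega : measurableType d}.
Local Open Scope ereal_scope.
Variables (c g al r Tm : R) (a h : Omega -> \bar R).
Hypotheses (ma : measurable_fun setT a) (mh : measurable_fun setT h).

Let mea := measurableT_comp (measurable_edisc r) ma.
Let meh := measurableT_comp (measurable_edisc r) mh.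

Lemma measurable_dintR (b : Omega -> \bar R) : measurable_fun setT b ->
  measurable_fun setT (fun w => dintR c r (a w) (b w)).
Proof.
move=> mb; apply: measurable_fun_ifT; first exact: measurable_fun_lte.
  apply: measurable_funM => //; apply: measurable_funB => //.
  exact: measurableT_comp (measurable_edisc r) mb.
exact: measurable_cst.
Qed.

Lemma measurable_payoffR : measurable_fun setT (fun w => payoffR c g al r (a w) (h w)).
Proof.
apply: measurable_funB; first exact: measurable_dintR.
apply: measurable_fun_ifT; [exact: measurable_fun_lte| |exact: measurable_cst].
by apply: measurable_funD; exact: measurable_funM.
Qed.

Lemma measurable_payoff_barR :
  measurable_fun setT (fun w => payoff_barR c g al r Tm (a w) (h w)).
Proof.
have mhT : measurable_fun setT (fun w => mine (h w) Tm%:E) by exact: measurable_mine.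
apply: measurable_funB; first apply: measurable_funB.
- exact: measurable_dintR.
- apply: measurable_fun_ifT; [exact: measurable_fun_lte| |exact: measurable_cst].
  exact: measurable_funM.
- apply: measurable_fun_ifT; [|exact: measurable_funM|exact: measurable_cst].
  by apply: measurable_and; exact: measurable_fun_lte.
Qed.

Lemma measurable_tail_costR : measurable_fun setT (fun w => tail_costR g al r Tm (h w)).
Proof.
apply: measurable_fun_ifT; [exact: measurable_fun_lee| |exact: measurable_cst].
by apply: measurable_funD; [exact: measurable_cst|exact: measurable_funM].
Qed.

End closed_forms_measurable.

Section closed_forms_bounded.
Context {R : realType}.
Local Open Scope ereal_scope.
Variables (c g al r Tm : R).
Hypotheses (c0 : (0 <= c)%R) (g0 : (0 <= g)%R) (al0 : (0 <= al)%R) (r0 : (0 <= r)%R)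
  (Tm0 : (0 < Tm)%R).
Variables (a h : \bar R).
Hypotheses (a0 : 0 <= a) (h0 : 0 <= h).

Let ca := mulr_edisc_itv c0 r0 a0.
Let ga := mulr_edisc_itv g0 r0 a0.
Let alh := mulr_edisc_itv al0 r0 h0.

Lemma normr_dintR_le (b : \bar R) : 0 <= b -> (`|dintR c r a b| <= c)%R.
Proof.
move=> b0; have /andP[? ?] := ca; have /andP[? ?] := mulr_edisc_itv c0 r0 b0.
by rewrite /dintR; case: ifP => _; rewrite ?normr0// ler_norml; apply/andP; split; lra.
Qed.

Lemma normr_payoffR_le : (`|payoffR c g al r a h| <= c + g + al)%R.
Proof.
have := normr_dintR_le h0; have /andP[? ?] := ga; have /andP[? ?] := alh.
rewrite /payoffR !ler_norml => /andP[? ?].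
by case: ifP => _; apply/andP; split; lra.
Qed.

Lemma normr_payoff_barR_le : (`|payoff_barR c g al r Tm a h| <= c + g + al)%R.
Proof.
have hT0 : 0 <= mine h Tm%:E by rewrite le_min h0 lee_fin ltW.
have := normr_dintR_le hT0; have /andP[? ?] := ga; have /andP[? ?] := alh.
rewrite /payoff_barR !ler_norml => /andP[? ?].
by case: ifP => _; case: ifP => _; apply/andP; split; lra.
Qed.

Lemma normr_tail_costR_le : (`|tail_costR g al r Tm h| <= g + al)%R.
Proof.
have Tm0e : 0 <= Tm%:E by rewrite lee_fin ltW.
have /andP[? ?] := mulr_edisc_itv g0 r0 Tm0e; have /andP[? ?] := alh.
rewrite /tail_costR -[expR _]/(edisc r Tm%:E).
by case: ifP => _; rewrite ?normr0 ?addr_ge0// ler_norml; apply/andP; split; lra.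
Qed.

End closed_forms_bounded.

Lemma integrable_bounded {R : realType} {d : measure_display} {Omega : measurableType d}
    (P : probability Omega R) (f : Omega -> R) (M : R) :
  measurable_fun setT f -> (forall w, `|f w| <= M) -> P.-integrable setT (EFin \o f).
Proof.
move=> mf fM; apply: measurable_bounded_integrable => //.
  by apply: (le_lt_trans (probability_le1 _ _)); rewrite ?ltry.
by exists M; split; [exact: num_real|move=> M' MM' w _; exact: le_trans (fM w) (ltW MM')].
Qed.

Section right_continuous_paths.
Context {R : realType}.

Lemma near_at_right_itv (u : R) (P : R -> Prop) :
  (\forall v \near u^'+, P v) -> exists2 e : R, 0 < e & forall v, u < v < u + e -> P v.
Proof.
move=> /nbhs_ballP[e /= e0 H]; exists e => // v /andP[uv ve]; apply: H => //.
by rewrite /ball /= ltr0_norm ?subr_lt0// opprB ltrBlDl.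
Qed.

Lemma near_at_left_itv (u : R) (P : R -> Prop) :
  (\forall v \near u^'-, P v) -> exists2 e : R, 0 < e & forall v, u - e < v < u -> P v.
Proof.
move=> /nbhs_ballP[e /= e0 H]; exists e => // v /andP[uv ve]; apply: H => //.
by rewrite /ball /= gtr0_norm ?subr_gt0// ltrBlDr -ltrBlDl.
Qed.

Variable f : R -> R.
Hypothesis f_rc : forall s, 0 <= s -> f x @[x --> s^'+] --> f s.
Hypothesis f_down : forall s, 0 < s -> exists2 l, f x @[x --> s^'-] --> l & f s <= l.

(* On the left of s, [f_down] keeps f close to a left limit that is at least f s. *)
Lemma gt0_path_local_lbound (s : R) : 0 <= s -> 0 < f s ->
  exists2 e, 0 < e & forall v, 0 <= v -> `|s - v| < e -> f s / 2 < f v.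
Proof.
move=> s0 fs0; have cfs : f s / 2 < f s by rewrite ltr_pdivrMr// ltr_pMr// ltr1n.
have [e1 e10 H1] := near_at_right_itv (cvgr_gt _ (f_rc s0) _ cfs).
have [e2 e20 H2] : exists2 e2, 0 < e2 &
    forall v, 0 <= v -> s - e2 < v < s -> f s / 2 < f v.
  have [->|s_neq0] := eqVneq s 0.
    by exists 1 => // v v0; rewrite sub0r => /andP[_]; rewrite ltNge v0.
  have [l fl fsl] : exists2 l, f x @[x --> s^'-] --> l & f s <= l.
    by apply: f_down; rewrite lt_neqAle eq_sym s_neq0.
  have [e2 e20 H2] := near_at_left_itv (cvgr_gt _ fl _ (lt_le_trans cfs fsl)).
  by exists e2 => // v _; exact: H2.
exists (Num.min e1 e2) => [|v v0]; first by rewrite lt_min e10 e20.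
rewrite lt_min => /andP[sv1 sv2].
have [vs|sv|->//] := ltgtP v s.
- apply: H2 => //; rewrite vs andbT.
  by move: sv2; rewrite gtr0_norm ?subr_gt0// ltrBlDr -ltrBlDl.
- apply: H1; rewrite sv /=.
  by move: sv1; rewrite ltr0_norm ?subr_lt0// opprB ltrBlDl.
Qed.

Lemma gt0_path_lbound (t : R) : (forall s, 0 <= s <= t -> 0 < f s) ->
  exists2 e, 0 < e & forall s, 0 <= s <= t -> e < f s.
Proof.
move=> fpos.
have /near_covering_withinP := (compact_near_coveringP _).1 (@segment_compact _ 0 t).
move=> /(_ R (nbhs (0 : R)^'+) (fun e s => e < f s) (at_right_proper_filter _)) [].
  move=> s; rewrite /= in_itv/= => st; have /andP[s0 _] := st.
  have fs0 := fpos s st; have [e e0 He] := gt0_path_local_lbound s0 fs0.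
  exists ([set v | `|s - v| < e], [set e' | e' < f s / 2]); first split.
  - by exists e.
  - exists (f s / 2) => [|e' /=]; first by rewrite /= divr_gt0.
    by rewrite sub0r normrN => /ltr_normlW + _.
  - by case=> v e' /= [sv es]; rewrite in_itv/= => /andP[v0 _]; exact: lt_trans es (He v v0 sv).
move=> e /= e0 He; exists (e / 2); first by rewrite divr_gt0.
move=> s st; apply: (He (e / 2)) => /=; last by rewrite in_itv.
- by rewrite sub0r normrN gtr0_norm ?divr_gt0// ltr_pdivrMr// ltr_pMr// ltr1n.
- by rewrite divr_gt0.
Qed.

Lemma exists_le0_ratP (t : R) : 0 <= t ->
  (exists2 s, 0 <= s <= t & f s <= 0) <->
  (forall n : nat, f t < n.+1%:R^-1 \/
     exists q : rat, 0 <= (ratr q : R) <= t /\ f (ratr q) < n.+1%:R^-1).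
Proof.
move=> t0; split.
  move=> [s /andP[s0 st] fs] n; have n0 : 0 < n.+1%:R^-1 :> R by rewrite invr_gt0.
  have [<-|s_neq_t] := eqVneq s t; first by left; exact: le_lt_trans fs n0.
  have {s_neq_t}st : s < t by rewrite lt_neqAle s_neq_t st.
  right; have [e e0 He] := near_at_right_itv (cvgr_lt _ (f_rc s0) _ (le_lt_trans fs n0)).
  have /rat_in_itvoo[q] : s < Num.min (s + e) t by rewrite lt_min st ltrDl e0.
  rewrite in_itv/= lt_min => /andP[sq /andP[qe qt]].
  exists q; split; first by rewrite (le_trans s0 (ltW sq)) ltW.
  by apply: He; rewrite sq qe.
move=> fsmall; apply: contrapT => nle0.
have fpos s : 0 <= s <= t -> 0 < f s.
  by move=> st; rewrite ltNge; apply/negP => fs; apply: nle0; exists s.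
have [e e0 He] := gt0_path_lbound fpos.
have [n ne] : exists n : nat, n.+1%:R^-1 < e.
  move: (truncnS_gt e^-1); set n := (X in X.+1%:R) => ltn; exists n.
  by rewrite -[e]invrK ltf_pV2 ?posrE ?invr_gt0.
have tt : 0 <= t <= t by rewrite t0 lexx.
case: (fsmall n) => [ft|[q [qt fq]]].
- by have := lt_trans (lt_trans ft ne) (He t tt); rewrite ltxx.
- by have := lt_trans (lt_trans fq ne) (He _ qt); rewrite ltxx.
Qed.

End right_continuous_paths.

Section stopping_times.
Context {R : realType} {d : measure_display} {Omega : measurableType d}.
Local Open Scope ereal_scope.

Lemma measurable_fun_ereal_le (f : Omega -> \bar R) :
  (forall t : R, measurable [set w | f w <= t%:E]) -> measurable_fun setT f.
Proof.
move=> mf _; apply: (measurability _ (ErealGenOInfty.measurableE R)) => //.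
move=> _ [_ [t ->] <-]; rewrite setTI.
rewrite (_ : _ @^-1` _ = ~` [set w | f w <= t%:E]); first exact: measurableC.
by apply/seteqP; split => w /=; rewrite in_itv/= andbT ltNge => /negP.
Qed.

Lemma stopping_time_measurable (Y : R -> Omega -> R) (tau : Omega -> \bar R) :
  (forall s, measurable_fun setT (Y s)) -> stopping_time Y tau ->
  measurable_fun setT tau.
Proof.
move=> mY [tau0 st]; apply: measurable_fun_ereal_le => t.
have [t0|t0] := ltP t 0%R.
  rewrite (_ : [set _ | _] = set0) //; apply/seteqP; split => w //=.
  by move=> /(le_trans (tau0 w)); rewrite lee_fin leNgt t0.
apply: smallest_sub (st t t0); first exact: sigma_algebra_measurable.
move=> _ [s [_ _ [B [mB ->]]]].
by rewrite -[_ @^-1` _]setTI; exact: (mY s measurableT B mB).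
Qed.

Lemma stopping_time_mine (Y : R -> Omega -> R) (tau : Omega -> \bar R) (Tm : R) :
  (0 <= Tm)%R -> stopping_time Y tau -> stopping_time Y (fun w => mine (tau w) Tm%:E).
Proof.
move=> T0 [tau0 st]; split=> [w|t t0]; first by rewrite le_min tau0 lee_fin.
have [Tt|tT] := leP Tm t.
  rewrite (_ : [set _ | _] = setT); last first.
    by apply/seteqP; split => w //= _; rewrite ge_min lee_fin Tt orbT.
  have [S0 SC _] := smallest_sigma_algebra setT
    [set A | exists s, [/\ 0 <= s, s <= t & exists B : set R, measurable B /\ A = Y s @^-1` B]]%R.
  by have := SC set0 S0; rewrite setD0.
rewrite (_ : [set _ | _] = [set w | tau w <= t%:E]); first exact: st.
apply/seteqP; split => w /=; rewrite ge_min lee_fin; last by move=> ->.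
by case/orP => // Tt; move: tT; rewrite ltNge Tt.
Qed.

End stopping_times.

Section first_passage.
Context {R : realType} {d : measure_display} {Omega : measurableType d}.
Local Open Scope ereal_scope.
Variable Y : R -> Omega -> R.

Lemma theta_ge0 w : 0 <= theta Y w.
Proof. by apply: le_ereal_inf_tmp => _ [t [t0 _] <-]; rewrite lee_fin. Qed.

(* Right continuity makes the infimum in [theta] attained. *)
Lemma theta_leP w (t : R) :
  (forall s, (0 <= s)%R -> (Y^~ w) x @[x --> s^'+] --> Y s w) ->
  theta Y w <= t%:E <-> exists2 s, (0 <= s <= t)%R & (Y s w <= 0)%R.
Proof.
move=> rc; split; last first.
  move=> [s /andP[s0 st] Ys]; apply: le_trans (_ : s%:E <= _); last by rewrite lee_fin.
  by apply: ereal_inf_lbound; exists s.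
move=> tht; have th0 := theta_ge0 w.
have thfin : theta Y w \is a fin_num by rewrite ge0_fin_numE// (le_lt_trans tht)// ltry.
set u := fine (theta Y w); have thu : theta Y w = u%:E by rewrite fineK.
have u0 : (0 <= u)%R by rewrite -lee_fin -thu.
have ut : (u <= t)%R by rewrite -lee_fin -thu.
have [Yu|Yu] := leP (Y u w) 0%R; first by exists u; rewrite ?u0.
have [e e0 He] := near_at_right_itv (cvgr_gt _ (rc u u0) _ Yu).
have : (u + e)%:E <= theta Y w.
  apply: le_ereal_inf_tmp => _ [s [s0 Ys] <-].
  have us : u%:E <= s%:E by rewrite -thu; apply: ereal_inf_lbound; exists s.
  rewrite lee_fin leNgt; apply/negP => se.
  move: us; rewrite lee_fin le_eqVlt => /predU1P[us|us].
    by move: Yu; rewrite us ltNge Ys.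
  by have := He s; rewrite us se => /(_ isT); rewrite ltNge Ys.
by rewrite thu lee_fin gerDl leNgt e0.
Qed.

Lemma measurable_theta (P : probability Omega R) :
  measure_is_complete P ->
  (forall s, measurable_fun setT (Y s)) ->
  (forall w s, (0 <= s)%R -> (Y^~ w) x @[x --> s^'+] --> Y s w) ->
  {ae P, forall w s, (0 < s)%R -> exists2 l, (Y^~ w) x @[x --> s^'-] --> l & (Y s w <= l)%R} ->
  measurable_fun setT (theta Y).
Proof.
move=> Pc mY rc [N [mN PN0 HN]]; apply: measurable_fun_ereal_le => t.
have [t0|t0] := ltP t 0%R.
  rewrite (_ : [set _ | _] = set0) //; apply/seteqP; split => w //=.
  by move=> /(le_trans (theta_ge0 w)); rewrite lee_fin leNgt t0.
(* Off the null set N, [theta <= t] is the countable event M; completeness covers N. *)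
pose M := \bigcap_(n in [set: nat]) ([set w | Y t w < n.+1%:R^-1]%R `|`
  \bigcup_(q : rat) [set w | (0 <= (ratr q : R) <= t)%R /\ (Y (ratr q) w < n.+1%:R^-1)%R]).
have mM : measurable M.
  apply: bigcapT_measurable => n; apply: measurableU.
    by rewrite -[X in measurable X]setTI; apply: measurable_fun_ltr => //; exact: measurable_cst.
  apply: bigcupT_measurable_rat => q.
  have [qt|qt] := boolP (0 <= ratr q <= t)%R.
    rewrite (_ : [set _ | _] = [set w | Y (ratr q) w < n.+1%:R^-1]%R); last first.
      by apply/seteqP; split => w /=; [case|].
    by rewrite -[X in measurable X]setTI; apply: measurable_fun_ltr => //; exact: measurable_cst.
  rewrite (_ : [set _ | _] = set0) //; apply/seteqP; split => w //= [qt' _].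
  by move/negP: qt.
have thetaM w : ~ N w -> theta Y w <= t%:E <-> M w.
  move=> Nw; have down : forall s, (0 < s)%R ->
      exists2 l, (Y^~ w) x @[x --> s^'-] --> l & (Y s w <= l)%R.
    by apply: contrapT => ?; apply: Nw; exact: HN.
  rewrite (theta_leP _ (rc w)) (exists_le0_ratP (rc w) down t0).
  split=> [H n _|H n]; first by case: (H n) => [?|[q ?]]; [left|right; exists q].
  by case: (H n I) => [?|[q _ ?]]; [left|right; exists q].
rewrite (_ : [set w | theta Y w <= t%:E] = (M `\` N) `|` ([set w | theta Y w <= t%:E] `&` N)).
  apply: measurableU; first exact: measurableD.
  by apply: Pc; exists N; split => //; exact: subIsetr.
apply/seteqP; split=> w; last by case=> [[Mw Nw]|[]//]; apply/(thetaM w Nw).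
move=> thw; have [Nw|Nw] := pselect (N w); [right|left] => //.
by split => //; apply/thetaM.
Qed.

End first_passage.

Section payoffs.
Context {R : realType} {d : measure_display} {Omega : measurableType d}.
Local Open Scope ereal_scope.
Variables (r p g al Tm : R) (Y : R -> Omega -> R).
Hypotheses (r0 : (0 < r)%R) (p0 : (0 <= p)%R) (Tm0 : (0 < Tm)%R).

Definition tail_reward (w : Omega) : \bar R :=
  if Tm%:E <= theta Y w then dint r p Tm%:E (theta Y w) else 0.

Definition tail_cost (w : Omega) : \bar R :=
  if Tm%:E <= theta Y w then (g * expR (- r * Tm) + al * edisc r (theta Y w))%:E else 0.

Lemma payoffE (tau : Omega -> \bar R) w : 0 <= tau w ->
  payoff r p g al Y tau w = (payoffR (p / r) g al r (tau w) (theta Y w))%:E.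
Proof.
move=> t0; rewrite /payoff /payoffR dintE //.
case: ifPn => [_|].
  by case: ifP => _; rewrite ?sube0 ?subr0// -!EFinB opprD addrA.
rewrite -leNgt leye_eq => /eqP ->.
by rewrite /dintR ltNge leey subr0.
Qed.

Lemma payoff_barE (tau : Omega -> \bar R) w : 0 <= tau w ->
  payoff_bar r p g al Tm Y tau w = (payoff_barR (p / r) g al r Tm (tau w) (theta Y w))%:E.
Proof.
move=> t0; rewrite /payoff_bar /payoff_barR dintE //.
by case: ifP => _; case: ifP => _; rewrite ?EFinB // ?sube0 ?subr0.
Qed.

Lemma tail_rewardE w : tail_reward w = (dintR (p / r) r Tm%:E (theta Y w))%:E.
Proof.
rewrite /tail_reward; case: ifPn => [_|]; first by rewrite dintE// lee_fin ltW.
by rewrite -ltNge /dintR => /lt_gtF ->.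
Qed.

Lemma tail_costE w : tail_cost w = (tail_costR g al r Tm (theta Y w))%:E.
Proof. by rewrite /tail_cost /tail_costR; case: ifP. Qed.

End payoffs.

Lemma ae_le_integral {R : realType} {d : measure_display} {Omega : measurableType d}
    (mu : {measure set Omega -> \bar R}) (f g : Omega -> \bar R) :
  mu.-integrable setT f -> mu.-integrable setT g -> {ae mu, forall w, (f w <= g w)%E} ->
  (\int[mu]_w f w <= \int[mu]_w g w)%E.
Proof.
move=> intf intg [N [mN N0 fgN]].
rewrite (negligible_integral mN)// [leRHS](negligible_integral mN)//.
have mTN : measurable (setT `\` N) by exact: measurableD.
apply: le_integral => //; try exact: integrableS intf || exact: integrableS intg.
by move=> w; rewrite inE => -[_ Nw]; apply: contrapT => fgw; apply: Nw; exact: fgN.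
Qed.

Section expected_payoffs.
Context {R : realType} {d : measure_display} {Omega : measurableType d}.
Local Open Scope ereal_scope.
Variables (P : probability Omega R) (r p g al Tm : R) (Y : R -> Omega -> R).
Hypotheses (r0 : (0 < r)%R) (p0 : (0 <= p)%R) (g0 : (0 <= g)%R) (al0 : (0 <= al)%R)
  (Tm0 : (0 < Tm)%R).
Hypotheses (mY : forall s, measurable_fun setT (Y s)) (mtheta : measurable_fun setT (theta Y)).

Let c0 : (0 <= p / r)%R. Proof. by rewrite divr_ge0// ltW. Qed.

Lemma integrable_payoff (tau : Omega -> \bar R) : stopping_time Y tau ->
  P.-integrable setT (payoff r p g al Y tau).
Proof.
move=> st; rewrite (_ : payoff _ _ _ _ _ _ =
    EFin \o fun w => payoffR (p / r) g al r (tau w) (theta Y w)).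
  apply: integrable_bounded; first exact: measurable_payoffR (stopping_time_measurable mY st) mtheta.
  by move=> w; apply: (normr_payoffR_le c0 g0 al0 (ltW r0) (st.1 w)); exact: theta_ge0.
by apply/funext => w; rewrite payoffE// st.1.
Qed.

Lemma integrable_payoff_bar (tau : Omega -> \bar R) : stopping_time Y tau ->
  P.-integrable setT (payoff_bar r p g al Tm Y tau).
Proof.
move=> st; rewrite (_ : payoff_bar _ _ _ _ _ _ _ =
    EFin \o fun w => payoff_barR (p / r) g al r Tm (tau w) (theta Y w)).
  apply: integrable_bounded.
    exact: measurable_payoff_barR (stopping_time_measurable mY st) mtheta.
  move=> w; apply: (normr_payoff_barR_le c0 g0 al0 (ltW r0) Tm0 (st.1 w)).
  exact: theta_ge0.
by apply/funext => w; rewrite payoff_barE// st.1.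
Qed.

Lemma integrable_tail_reward : P.-integrable setT (tail_reward r p Tm Y).
Proof.
rewrite (_ : tail_reward _ _ _ _ = EFin \o fun w => dintR (p / r) r Tm%:E (theta Y w)).
  apply: integrable_bounded; first exact: (measurable_dintR _ _ (measurable_cst Tm%:E) mtheta).
  move=> w; apply: (normr_dintR_le c0 (ltW r0)); last exact: theta_ge0.
  by rewrite lee_fin ltW.
by apply/funext => w; rewrite tail_rewardE.
Qed.

Lemma integrable_tail_cost : P.-integrable setT (tail_cost r g al Tm Y).
Proof.
rewrite (_ : tail_cost _ _ _ _ _ = EFin \o fun w => tail_costR g al r Tm (theta Y w)).
  apply: integrable_bounded; first exact: measurable_tail_costR.
  by move=> w; apply: (normr_tail_costR_le g0 al0 (ltW r0) Tm0); exact: theta_ge0.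
by apply/funext => w; rewrite tail_costE.
Qed.

Lemma expected_payoff_sub_tail_le (tau : Omega -> \bar R) : stopping_time Y tau ->
  {ae P, forall w, tau w <= theta Y w} ->
  \int[P]_w payoff r p g al Y tau w - \int[P]_w tail_reward r p Tm Y w
  <= \int[P]_w payoff_bar r p g al Tm Y (fun w => mine (tau w) Tm%:E) w.
Proof.
move=> st tau_le; have st' := stopping_time_mine (ltW Tm0) st.
rewrite -integralB//; [|exact: integrable_payoff|exact: integrable_tail_reward].
apply: ae_le_integral; last 2 first.
- exact: integrable_payoff_bar.
- apply: filterS tau_le => w tw.
  rewrite (payoffE _ _ _ r0 p0 (st.1 w)) (payoff_barE _ _ _ _ r0 p0 (st'.1 w)).
  rewrite tail_rewardE// -EFinB lee_fin.
  by apply: (payoffR_sub_le_payoff_barR_min c0 g0 al0 (ltW r0) Tm0); first exact: st.1.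
by apply: integrableB => //; [exact: integrable_payoff|exact: integrable_tail_reward].
Qed.

Lemma expected_payoff_bar_le (tau : Omega -> \bar R) : stopping_time Y tau ->
  {ae P, forall w, tau w <= mine (theta Y w) Tm%:E} ->
  \int[P]_w payoff_bar r p g al Tm Y tau w
  <= \int[P]_w payoff r p g al Y tau w - \int[P]_w tail_reward r p Tm Y w
     + \int[P]_w tail_cost r g al Tm Y w.
Proof.
move=> st tau_le.
have intB := integrableB measurableT (integrable_payoff st) integrable_tail_reward.
rewrite -(integralB measurableT (integrable_payoff st) integrable_tail_reward).
rewrite -(integralD measurableT intB integrable_tail_cost).
apply: ae_le_integral; first exact: integrable_payoff_bar.
  exact: integrableD integrable_tail_cost.
apply: filterS tau_le => w; rewrite le_min => /andP[tw tT].
rewrite (payoffE _ _ _ r0 p0 (st.1 w)) (payoff_barE _ _ _ _ r0 p0 (st.1 w)).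
rewrite tail_rewardE// tail_costE -EFinB -EFinD lee_fin.
by apply: (payoff_barR_le _ _ g0 al0); first exact: st.1.
Qed.

End expected_payoffs.


Lemma measurable_theta_levy {R : realType} {d : measure_display} {Omega : measurableType d}
    (P : probability Omega R) (X : R -> Omega -> R) (x : R) :
  measure_is_complete P -> is_spectrally_negative_levy P X ->
  measurable_fun setT (theta (start_at x X)).
Proof.
move=> Pc [[mX _ [rc lc] _ _] jumps _ _]; apply: (measurable_theta Pc).
- by move=> s; rewrite /start_at; apply: measurable_funD => //; exact: measurable_cst.
- by move=> w s s0; apply: cvgD; [exact: cvg_cst|exact: rc].
apply: filterS jumps => w jw s s0; exists (x + lim ((X^~ w) @ s^'-)).
  by apply: cvgD; [exact: cvg_cst|exact: lc].
by rewrite lerD2l -subr_le0; exact: jw.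
Qed.

Theorem lemma5p2 (R : realType) (d : measure_display) (Omega : measurableType d)
  (P : probability Omega R) (X : R -> Omega -> R) (r pc gamma alc : R) :
  measure_is_complete P ->
  is_spectrally_negative_levy P X ->
  0 < r ->
  (\int[P]_w (expR (X 1 w))%:E)%E = (expR r)%:E ->
  0 < pc -> 0 < alc -> 0 <= gamma ->
  forall x Tm : R, 0 < x -> 0 < Tm ->
  (vtilde P X r pc gamma alc x Tm <= vbar P X r pc gamma alc x Tm /\
   vbar P X r pc gamma alc x Tm <=
     vtilde P X r pc gamma alc x Tm
     + \int[P]_w (if Tm%:E <= theta (start_at x X) w
                  then (gamma * expR (- r * Tm)
                        + alc * edisc r (theta (start_at x X) w))%:E
                  else 0))%E.
Proof.
move=> Pc HX r0 _ pc0 alc0 gamma0 x Tm _ Tm0.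
have mth := measurable_theta_levy x Pc HX.
have [[mX _ _ _ _] _ _ _] := HX.
set Y := start_at x X.
have mY s : measurable_fun setT (Y s) by apply: measurable_funD => //; exact: measurable_cst.
have [pc0' alc0'] := (ltW pc0, ltW alc0).
have fin_tail := integrable_fin_num measurableT (integrable_tail_reward P r0 pc0' Tm0 mth).
have lower := @expected_payoff_sub_tail_le _ _ _ P _ _ _ _ _ _ r0 pc0' gamma0 alc0' Tm0 mY mth.
have upper := @expected_payoff_bar_le _ _ _ P _ _ _ _ _ _ r0 pc0' gamma0 alc0' Tm0 mY mth.
split.
- rewrite /vtilde -/Y leeBlDr//; apply: ge_ereal_sup => _ [tau [st tau_le] <-].
  rewrite -leeBlDr//; apply: le_trans (lower _ st tau_le) _.
  apply: ereal_sup_ubound; exists (fun w => mine (tau w) Tm%:E) => //.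
  split; first exact: stopping_time_mine (ltW Tm0) st.
  by apply: filterS tau_le => w tw; rewrite le_min2.
- apply: ge_ereal_sup => _ [tau [st tau_le] <-].
  apply: le_trans (upper _ st tau_le) _.
  apply/leeD2r/leeB => //; apply: ereal_sup_ubound; exists tau => //; split => //.
  by apply: filterS tau_le => w; rewrite le_min => /andP[].
Qed.
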